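(* Let $\pi,\hat\pi\in\mathcal S_n$, $\eta,\hat\eta\in\mathcal S_d$, $M\in\mathbb{C}_{\mathrm{Biso}}(\pi,\eta)$, and $p,h\in\mathbb{R}$ with $h\ge 0$. Then \[ \mathcal L_{p,2h}(\hat\pi,\hat\eta)\leq 2\big(\mathcal R_{p-h,h}(\hat\pi)+\mathcal C_{p+h,h}(\hat\eta)\big)\wedge 2\big(\mathcal C_{p-h,h}(\hat\eta)+\mathcal R_{p+h,h}(\hat\pi)\big), \] and \[ \mathcal L_{p,h}(\hat\pi,\hat\eta)\geq \mathcal R_{p,h}(\hat\pi)\vee\mathcal C_{p,h}(\hat\eta). \]
   Context: A matrix is bi-isotonic if it is non-increasing along each row and each column. $\mathbb{C}_{\mathrm{Biso}}(\pi,\eta)$ is the set of $M\in[0,1]^{n\times d}$ such that $(M_{\pi^{-1}(i)\eta^{-1}(j)})_{ij}$ is bi-isotonic. $\mathcal{L}_{p,h}(\hat\pi,\hat\eta)=|\{(i,j): M_{\pi^{-1}(i)\eta^{-1}(j)}\leq p-h,\ M_{\hat\pi^{-1}(i)\hat\eta^{-1}(j)}\geq p+h\}|+|\{(i,j): M_{\pi^{-1}(i)\eta^{-1}(j)}\geq p+h,\ M_{\hat\pi^{-1}(i)\hat\eta^{-1}(j)}\leq p-h\}|$ (with $(i,j)$ ranging over $[n]\times[d]$). $\mathcal R_{p,h}(\hat\pi)=|\{(i,j): M_{\pi^{-1}(i)j}\leq p-h,\ M_{\hat\pi^{-1}(i)j}\geq p+h\}|+|\{(i,j): M_{\pi^{-1}(i)j}\geq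 p+h,\ M_{\hat\pi^{-1}(i)j}\leq p-h\}|$. $\mathcal C_{p,h}(\hat\eta)=|\{(i,j): M_{i\eta^{-1}(j)}\leq p-h,\ M_{i\hat\eta^{-1}(j)}\geq p+h\}|+|\{(i,j): M_{i\eta^{-1}(j)}\geq p+h,\ M_{i\hat\eta^{-1}(j)}\leq p-h\}|$. *)

From HB Require Import structures.
From mathcomp Require Import all_boot all_order all_algebra all_fingroup.
Set Implicit Arguments. Unset Strict Implicit. Unset Printing Implicit Defensive.
Import Order.TTheory GRing.Theory Num.Theory.
Local Open Scope ring_scope.

Definition bi_isotonic (R : realFieldType) (n d : nat) (N : 'M[R]_(n, d)) : Prop :=
  (forall (i i' : 'I_n) (j : 'I_d), (i <= i')%N -> N i' j <= N i j) /\
  (forall (i : 'I_n) (j j' : 'I_d), (j <= j')%N -> N i j' <= N i j).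

Definition CBiso (R : realFieldType) (n d : nat) (pi : 'S_n) (eta : 'S_d)
    (M : 'M[R]_(n, d)) : Prop :=
  (forall i j, 0 <= M i j <= 1) /\
  bi_isotonic (\matrix_(i, j) M ((pi^-1)%g i) ((eta^-1)%g j)).

Definition Lloss (R : realFieldType) (n d : nat) (M : 'M[R]_(n, d))
    (pi pih : 'S_n) (eta etah : 'S_d) (p h : R) : nat :=
  #|[set ij : 'I_n * 'I_d |
       (M ((pi^-1)%g ij.1) ((eta^-1)%g ij.2) <= p - h) &&
       (p + h <= M ((pih^-1)%g ij.1) ((etah^-1)%g ij.2))]| +
  #|[set ij : 'I_n * 'I_d |
       (p + h <= M ((pi^-1)%g ij.1) ((eta^-1)%g ij.2)) &&
       (M ((pih^-1)%g ij.1) ((etah^-1)%g ij.2) <= p - h)]|.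

Definition Rloss (R : realFieldType) (n d : nat) (M : 'M[R]_(n, d))
    (pi pih : 'S_n) (p h : R) : nat :=
  #|[set ij : 'I_n * 'I_d |
       (M ((pi^-1)%g ij.1) ij.2 <= p - h) &&
       (p + h <= M ((pih^-1)%g ij.1) ij.2)]| +
  #|[set ij : 'I_n * 'I_d |
       (p + h <= M ((pi^-1)%g ij.1) ij.2) &&
       (M ((pih^-1)%g ij.1) ij.2 <= p - h)]|.

Definition Closs (R : realFieldType) (n d : nat) (M : 'M[R]_(n, d))
    (eta etah : 'S_d) (p h : R) : nat :=
  #|[set ij : 'I_n * 'I_d |
       (M ij.1 ((eta^-1)%g ij.2) <= p - h) &&
       (p + h <= M ij.1 ((etah^-1)%g ij.2))]| +
  #|[set ij : 'I_n * 'I_d |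
       (p + h <= M ij.1 ((eta^-1)%g ij.2)) &&
       (M ij.1 ((etah^-1)%g ij.2) <= p - h)]|.

(* The upper bound uses no structure of M. If an entry is at most p - 2h under
   (pi, eta) and at least p + 2h under (pih, etah), the hybrid entry taken with
   rows from pih and columns from eta lies on one side of p; accordingly the
   entry is counted by a disagreement between the rows only, at level p - h, or
   between the columns only, at level p + h. Using the other hybrid gives the
   second bound.

   The lower bound is proved row by row (columns are symmetric). Both rows
   involved are non-increasing along the true column order eta, so the columns
   where the first is <= p - h and those where the second is >= p + h form a
   final and an initial segment of that order. If the segments meet they cover
   all columns, so their intersection is as small as an intersection of sets of
   these sizes can be, and reordering the columns of the second row by any
   permutation cannot shrink it. *)

From HB Require Import structures.
From mathcomp Require Import all_boot all_order all_algebra all_fingroup.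
From mathcomp Require Import ring zify.
Import Order.TTheory GRing.Theory Num.Theory.
Local Open Scope ring_scope.

Set Implicit Arguments.
Unset Strict Implicit.
Unset Printing Implicit Defensive.

Lemma injective_pair (T1 T2 : Type) (u : T1 -> T1) (v : T2 -> T2) :
  injective u -> injective v -> injective (fun x : T1 * T2 => (u x.1, v x.2)).
Proof. by move=> u_inj v_inj [a b] [c e] /= [/u_inj -> /v_inj ->]. Qed.

Lemma card_set_pair (T1 T2 : finType) (P : pred (T1 * T2)) :
  #|[set x | P x]| = (\sum_(i : T1) #|[set k | P (i, k)]|)%N.
Proof.
under eq_bigr do rewrite -sum1dep_card big_mkcond /=.
by rewrite pair_bigA -sum1dep_card big_mkcond; apply: eq_bigr => -[i k].
Qed.

Lemma card_setI_le_preimset (T : finType) (X Y : {set T}) (s : T -> T) :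
  injective s -> (X :&: Y != set0 -> X :|: Y = [set: T]) ->
  (#|X :&: Y| <= #|X :&: s @^-1: Y|)%N.
Proof.
move=> s_inj cover.
have [/eqP->|/cover XUY] := boolP (X :&: Y == set0); first by rewrite cards0.
have := cardsUI X Y; rewrite XUY cardsT.
have := cardsUI X (s @^-1: Y); rewrite card_preimset //.
have := subset_leq_card (subsetT (X :|: s @^-1: Y)); rewrite cardsT.
lia.
Qed.

Section SplitCount.

Variable R : realDomainType.

Definition split_count (T : finType) (f g : T -> R) (lo hi : R) : nat :=
  #|[set x | (f x <= lo) && (hi <= g x)]|.

Definition mismatch (T : finType) (f g : T -> R) (p h : R) : nat :=
  (split_count f g (p - h) (p + h) + split_count g f (p - h) (p + h))%N.

Lemma split_count_triangle (T : finType) (f a g : T -> R) (lo mid hi : R) :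
  (split_count f g lo hi <= split_count f a lo mid + split_count a g mid hi)%N.
Proof.
apply: leq_trans (leq_card_setU _ _); apply: subset_leq_card.
apply/subsetP => x; rewrite !inE => /andP[fx gx].
by case: (leP mid (a x)) => ax; rewrite ?fx ?gx ?ax ?(ltW ax).
Qed.

Lemma split_count_comp (T : finType) (f g : T -> R) (s : T -> T) (lo hi : R) :
  injective s ->
  split_count (fun x => f (s x)) (fun x => g (s x)) lo hi = split_count f g lo hi.
Proof.
move=> s_inj; rewrite /split_count -[RHS](card_preimset _ s_inj).
by apply: eq_card => x; rewrite !inE.
Qed.

Lemma split_count_swap (T1 T2 : finType) (f g : T1 * T2 -> R) (lo hi : R) :
  split_count f g lo hi =
  split_count (fun y => f (swap_pair y)) (fun y => g (swap_pair y)) lo hi.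
Proof.
rewrite /split_count -(card_imset _ (can_inj swap_pairK)).
rewrite (can2_imset_pre _ swap_pairK swap_pairK).
by apply: eq_card => x; rewrite !inE.
Qed.

Lemma split_count_sum (T1 T2 : finType) (f g : T1 * T2 -> R) (lo hi : R) :
  split_count f g lo hi =
  (\sum_(i : T1) split_count (fun k => f (i, k)) (fun k => g (i, k)) lo hi)%N.
Proof. exact: card_set_pair. Qed.

Lemma split_count_le_perm (T : finType) (key : T -> nat) (f g : T -> R)
    (s : {perm T}) (lo hi : R) :
  (forall x y, (key x <= key y)%N -> f y <= f x) ->
  (forall x y, (key x <= key y)%N -> g y <= g x) ->
  (split_count f g lo hi <= split_count f (fun x => g (s x)) lo hi)%N.
Proof.
move=> f_anti g_anti.
have setIE (P Q : pred T) : [set x | P x && Q x] = [set x | P x] :&: [set x | Q x].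
  by apply/setP => x; rewrite !inE.
rewrite /split_count !setIE.
have -> : [set x | hi <= g (s x)] = s @^-1: [set x | hi <= g x].
  by apply/setP => x; rewrite !inE.
apply: card_setI_le_preimset; first exact: perm_inj.
case/set0Pn=> x0; rewrite !inE => /andP[fx0 gx0].
apply/setP => y; rewrite !inE.
case: (leqP (key x0) (key y)) => [/f_anti fy | /ltnW /g_anti gy].
  by rewrite (le_trans fy fx0).
by rewrite (le_trans gx0 gy) orbT.
Qed.

Lemma split_count_le_perm_snd (T1 T2 : finType) (key : T2 -> nat)
    (f g : T1 * T2 -> R) (s t : {perm T2}) (lo hi : R) :
  (forall i x y, (key x <= key y)%N -> f (i, y) <= f (i, x)) ->
  (forall i x y, (key x <= key y)%N -> g (i, y) <= g (i, x)) ->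
  (split_count f g lo hi <=
   split_count (fun x => f (x.1, s x.2)) (fun x => g (x.1, t x.2)) lo hi)%N.
Proof.
move=> f_anti g_anti.
have -> : split_count (fun x => f (x.1, s x.2)) (fun x => g (x.1, t x.2)) lo hi =
          split_count f (fun x => g (x.1, (s^-1 * t)%g x.2)) lo hi.
  rewrite -(split_count_comp f (fun x => g (x.1, (s^-1 * t)%g x.2)) lo hi
              (injective_pair (@inj_id _) (@perm_inj _ s))).
  by apply: eq_card => x; rewrite !inE /= permM permK.
rewrite !split_count_sum; apply: leq_sum => i _.
exact: (split_count_le_perm (s^-1 * t)%g lo hi (f_anti i) (g_anti i)).
Qed.

Lemma split_count_le_perm_fst (T1 T2 : finType) (key : T1 -> nat)
    (f g : T1 * T2 -> R) (s t : {perm T1}) (lo hi : R) :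
  (forall j x y, (key x <= key y)%N -> f (y, j) <= f (x, j)) ->
  (forall j x y, (key x <= key y)%N -> g (y, j) <= g (x, j)) ->
  (split_count f g lo hi <=
   split_count (fun x => f (s x.1, x.2)) (fun x => g (t x.1, x.2)) lo hi)%N.
Proof.
move=> f_anti g_anti; rewrite [leqLHS]split_count_swap [leqRHS]split_count_swap.
exact: (split_count_le_perm_snd (key := key)).
Qed.

Lemma mismatch_double_le (T : finType) (f g a b : T -> R) (p h : R) :
  (mismatch f g p (2 * h) <=
   (split_count f a (p - h - h) (p - h + h) +
    split_count g b (p - h - h) (p - h + h)) +
   (split_count a g (p + h - h) (p + h + h) +
    split_count b f (p + h - h) (p + h + h)))%N.
Proof.
have -> : p - h - h = p - 2 * h by ring.
have -> : p - h + h = p by ring.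
have -> : p + h - h = p by ring.
have -> : p + h + h = p + 2 * h by ring.
by rewrite /mismatch addnACA; apply: leq_add; apply: split_count_triangle.
Qed.

Lemma mismatch_le_perm_snd (T1 T2 : finType) (key : T2 -> nat)
    (f g : T1 * T2 -> R) (s t : {perm T2}) (p h : R) :
  (forall i x y, (key x <= key y)%N -> f (i, y) <= f (i, x)) ->
  (forall i x y, (key x <= key y)%N -> g (i, y) <= g (i, x)) ->
  (mismatch f g p h <=
   mismatch (fun x => f (x.1, s x.2)) (fun x => g (x.1, t x.2)) p h)%N.
Proof.
move=> f_anti g_anti; apply: leq_add.
  exact: (split_count_le_perm_snd s t _ _ f_anti g_anti).
exact: (split_count_le_perm_snd t s _ _ g_anti f_anti).
Qed.

Lemma mismatch_le_perm_fst (T1 T2 : finType) (key : T1 -> nat)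
    (f g : T1 * T2 -> R) (s t : {perm T1}) (p h : R) :
  (forall j x y, (key x <= key y)%N -> f (y, j) <= f (x, j)) ->
  (forall j x y, (key x <= key y)%N -> g (y, j) <= g (x, j)) ->
  (mismatch f g p h <=
   mismatch (fun x => f (s x.1, x.2)) (fun x => g (t x.1, x.2)) p h)%N.
Proof.
move=> f_anti g_anti; apply: leq_add.
  exact: (split_count_le_perm_fst s t _ _ f_anti g_anti).
exact: (split_count_le_perm_fst t s _ _ g_anti f_anti).
Qed.

End SplitCount.

Section PermutedMatrix.

Variables (R : realFieldType) (n d : nat) (M : 'M[R]_(n, d)).

Definition permuted_rows (s : 'S_n) (x : 'I_n * 'I_d) : R := M ((s^-1)%g x.1) x.2.
Definition permuted_cols (t : 'S_d) (x : 'I_n * 'I_d) : R := M x.1 ((t^-1)%g x.2).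
Definition permuted (s : 'S_n) (t : 'S_d) (x : 'I_n * 'I_d) : R :=
  M ((s^-1)%g x.1) ((t^-1)%g x.2).

Lemma LlossE pi pih eta etah p h :
  Lloss M pi pih eta etah p h = mismatch (permuted pi eta) (permuted pih etah) p h.
Proof.
rewrite /Lloss /mismatch /split_count; congr (_ + _).
by apply: eq_card => x; rewrite !inE andbC.
Qed.

Lemma RlossE pi pih p h :
  Rloss M pi pih p h = mismatch (permuted_rows pi) (permuted_rows pih) p h.
Proof.
rewrite /Rloss /mismatch /split_count; congr (_ + _).
by apply: eq_card => x; rewrite !inE andbC.
Qed.

Lemma ClossE eta etah p h :
  Closs M eta etah p h = mismatch (permuted_cols eta) (permuted_cols etah) p h.
Proof.
rewrite /Closs /mismatch /split_count; congr (_ + _).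
by apply: eq_card => x; rewrite !inE andbC.
Qed.

Lemma split_count_permuted_rows s s' t lo hi :
  split_count (permuted s t) (permuted s' t) lo hi =
  split_count (permuted_rows s) (permuted_rows s') lo hi.
Proof.
exact: (split_count_comp (permuted_rows s) (permuted_rows s') lo hi
         (injective_pair (@inj_id _) (@perm_inj _ (t^-1)%g))).
Qed.

Lemma split_count_permuted_cols s t t' lo hi :
  split_count (permuted s t) (permuted s t') lo hi =
  split_count (permuted_cols t) (permuted_cols t') lo hi.
Proof.
exact: (split_count_comp (permuted_cols t) (permuted_cols t') lo hi
         (injective_pair (@perm_inj _ (s^-1)%g) (@inj_id _))).
Qed.

Lemma CBiso_row_anti pi eta a k k' : CBiso pi eta M ->
  (eta k <= eta k')%N -> M a k' <= M a k.
Proof. by case=> _ [_ Mrows] /(Mrows (pi a)); rewrite !mxE !permK. Qed.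

Lemma CBiso_col_anti pi eta b i i' : CBiso pi eta M ->
  (pi i <= pi i')%N -> M i' b <= M i b.
Proof. by case=> _ [Mcols _] /(Mcols _ _ (eta b)); rewrite !mxE !permK. Qed.

Lemma Lloss_double_le_Rloss_Closs pi pih eta etah p h :
  (Lloss M pi pih eta etah p (2 * h) <=
   Rloss M pi pih (p - h) h + Closs M eta etah (p + h) h)%N.
Proof.
rewrite LlossE RlossE ClossE.
apply: leq_trans (mismatch_double_le _ _ (permuted pih eta) (permuted pi etah) p h) _.
by rewrite /mismatch !split_count_permuted_rows !split_count_permuted_cols.
Qed.

Lemma Lloss_double_le_Closs_Rloss pi pih eta etah p h :
  (Lloss M pi pih eta etah p (2 * h) <=
   Closs M eta etah (p - h) h + Rloss M pi pih (p + h) h)%N.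
Proof.
rewrite LlossE RlossE ClossE.
apply: leq_trans (mismatch_double_le _ _ (permuted pi etah) (permuted pih eta) p h) _.
by rewrite /mismatch !split_count_permuted_rows !split_count_permuted_cols.
Qed.

Lemma Rloss_le_Lloss pi pih eta etah p h : CBiso pi eta M ->
  (Rloss M pi pih p h <= Lloss M pi pih eta etah p h)%N.
Proof.
move=> Mbiso; rewrite RlossE LlossE.
apply: (mismatch_le_perm_snd (key := fun k => eta k) (eta^-1)%g (etah^-1)%g)
  => i x y; exact: CBiso_row_anti Mbiso.
Qed.

Lemma Closs_le_Lloss pi pih eta etah p h : CBiso pi eta M ->
  (Closs M eta etah p h <= Lloss M pi pih eta etah p h)%N.
Proof.
move=> Mbiso; rewrite ClossE LlossE.
apply: (mismatch_le_perm_fst (key := fun i => pi i) (pi^-1)%g (pih^-1)%g)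
  => j x y; exact: CBiso_col_anti Mbiso.
Qed.

End PermutedMatrix.

Theorem lemmaA1 (R : realFieldType) (n d : nat) (pi pih : 'S_n) (eta etah : 'S_d)
    (M : 'M[R]_(n, d)) (p h : R) :
  CBiso pi eta M -> 0 <= h ->
  (Lloss M pi pih eta etah p (2 * h) <=
     minn (2 * (Rloss M pi pih (p - h) h + Closs M eta etah (p + h) h))
          (2 * (Closs M eta etah (p - h) h + Rloss M pi pih (p + h) h)))%N /\
  (maxn (Rloss M pi pih p h) (Closs M eta etah p h) <=
     Lloss M pi pih eta etah p h)%N.
Proof.
move=> Mbiso _; split.
  rewrite leq_min; apply/andP; split; apply: leq_trans (leq_pmull _ (isT : 0 < 2)%N).
    exact: Lloss_double_le_Rloss_Closs.
  exact: Lloss_double_le_Closs_Rloss.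
by rewrite geq_max Rloss_le_Lloss ?Closs_le_Lloss.
Qed.
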